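(* Let $n,m\ge 1$, let $A_1,\dots,A_m\in\mathbb{S}^n$ and $b\in\mathbb{R}^m$ be fixed, and let $p\ge 1$ be such that $\frac{p(p+1)}{2}>\operatorname{rank}\mathcal{A}$ and such that Assumption 1 holds for $p$. Then for almost every cost matrix $C\in\mathbb{S}^n$ (i.e., for all $C$ outside a Lebesgue-null subset of $\mathbb{S}^n$), the following holds: if $Y\in\mathcal{M}_p$ is a second-order critical point of (P), then $Y$ is globally optimal for (P) and $X=YY^\top$ is globally optimal for (SDP).
   Context: $\mathbb{S}^n$ is the space of real symmetric $n\times n$ matrices; $\langle U,V\rangle=\operatorname{tr}(U^\top V)$. The linear map $\mathcal{A}:\mathbb{S}^n\to\mathbb{R}^m$ is $\mathcal{A}(X)_i=\langle A_i,X\rangle$, with adjoint $\mathcal{A}^*(\nu)=\sum_i\nu_iA_i$; $\operatorname{rank}\mathcal{A}$ is the rank of this linear map. For $C\in\mathbb{S}^n$, (SDP) is: minimize $\langle C,X\rangle$ over $X\in\mathbb{S}^n$ with $\mathcal{A}(X)=b$, $X\succeq 0$ (feasible set assumed non-empty). For $p\ge1$, $\mathcal{M}_p=\{Y\in\mathbb{R}^{n\times p}:\mathcal{A}(YY^\top)=b\}$ and (P) is: minimize $g(Y)=\langle CY,Y\rangle$ over $Y\in\mathcal{M}_p$. Assumption 1 (for a given $p$ with $\mathcal{M}_p\neq\emptyset$): either (a) $A_1Y,\dots,A_mY$ are linearly independent in $\mathbb{R}^{n\times p}$ for all $Y\in\mathcal{M}_p$, or (b) $\operatorname{span}\{A_1Y,\dots,A_mY\}$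 has the same dimension for all $Y$ in some open neighborhood of $\mathcal{M}_p$ in $\mathbb{R}^{n\times p}$. For $Y\in\mathcal{M}_p$: the tangent space is $T_Y=\{\dot Y\in\mathbb{R}^{n\times p}:\langle A_iY,\dot Y\rangle=0,\ i=1,\dots,m\}$; $G(Y)\in\mathbb{R}^{m\times m}$ has entries $G_{ij}=\langle A_iY,A_jY\rangle$; $\mu(Y)=G(Y)^\dagger\mathcal{A}(CYY^\top)$ (Moore–Penrose pseudo-inverse); $S(Y)=C-\mathcal{A}^*(\mu(Y))$. $Y$ is a (first-order) critical point of (P) if $S(Y)Y=0$, and a second-order critical point if moreover $\langle\dot Y,S(Y)\dot Y\rangle\ge0$ for all $\dot Y\in T_Y$. *)

From HB Require Import structures.
From mathcomp Require Import all_boot all_order all_algebra.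
From mathcomp Require Import reals.
From Stdlib Require Import ClassicalEpsilon.

Set Implicit Arguments.
Unset Strict Implicit.
Unset Printing Implicit Defensive.

Import Order.TTheory GRing.Theory Num.Theory.
Local Open Scope ring_scope.

Section BMdefs.
Variable R : realType.

Definition inner (r c : nat) (U V : 'M[R]_(r, c)) : R := \tr (U^T *m V).

Definition sym_mx (n : nat) (X : 'M[R]_n) : Prop := X^T = X.

Definition psd (n : nat) (X : 'M[R]_n) : Prop :=
  forall v : 'cV[R]_n, 0 <= (v^T *m X *m v) 0 0.

Definition Aop (n m : nat) (A : 'I_m -> 'M[R]_n) (X : 'M[R]_n) : 'I_m -> R :=
  fun i => inner (A i) X.

Definition Aadj (n m : nat) (A : 'I_m -> 'M[R]_n) (nu : 'I_m -> R) : 'M[R]_n :=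
  \sum_(i < m) nu i *: A i.

(* rank of cal A: the rank of its matrix, whose i-th row is vec(A_i)
   (since <A_i, X> = vec(A_i) . vec(X)). *)
Definition rankA (n m : nat) (A : 'I_m -> 'M[R]_n) : nat :=
  \rank (\matrix_(i < m) mxvec (A i)).

Definition SDP_feasible (n m : nat) (A : 'I_m -> 'M[R]_n) (b : 'I_m -> R)
  (X : 'M[R]_n) : Prop :=
  sym_mx X /\ psd X /\ Aop A X = b.

Definition SDP_optimal (n m : nat) (A : 'I_m -> 'M[R]_n) (b : 'I_m -> R)
  (C X : 'M[R]_n) : Prop :=
  SDP_feasible A b X /\
  forall X', SDP_feasible A b X' -> inner C X <= inner C X'.

Definition Mp (n m p : nat) (A : 'I_m -> 'M[R]_n) (b : 'I_m -> R)
  (Y : 'M[R]_(n, p)) : Prop :=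
  Aop A (Y *m Y^T) = b.

Definition gcost (n p : nat) (C : 'M[R]_n) (Y : 'M[R]_(n, p)) : R :=
  inner (C *m Y) Y.

Definition P_optimal (n m p : nat) (A : 'I_m -> 'M[R]_n) (b : 'I_m -> R)
  (C : 'M[R]_n) (Y : 'M[R]_(n, p)) : Prop :=
  Mp A b Y /\ forall Z : 'M[R]_(n, p), Mp A b Z -> gcost C Y <= gcost C Z.

Definition spandim (n m p : nat) (A : 'I_m -> 'M[R]_n) (Y : 'M[R]_(n, p)) : nat :=
  \rank (\matrix_(i < m) mxvec (A i *m Y)).

Definition open_mx (n p : nat) (U : 'M[R]_(n, p) -> Prop) : Prop :=
  forall Y, U Y -> exists2 eps : R, 0 < eps &
    forall Z : 'M[R]_(n, p), (forall i j, `|Z i j - Y i j| < eps) -> U Z.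

Definition assumption1 (n m p : nat) (A : 'I_m -> 'M[R]_n) (b : 'I_m -> R) : Prop :=
  (forall Y : 'M[R]_(n, p), Mp A b Y ->
     forall c : 'I_m -> R, \sum_(i < m) c i *: (A i *m Y) = 0 -> forall i, c i = 0)
  \/
  (exists U : 'M[R]_(n, p) -> Prop,
     open_mx U /\ (forall Y, Mp A b Y -> U Y) /\
     exists r : nat, forall Y, U Y -> spandim A Y = r).

Definition tangent (n m p : nat) (A : 'I_m -> 'M[R]_n) (Y Yd : 'M[R]_(n, p)) : Prop :=
  forall i, inner (A i *m Y) Yd = 0.

Definition is_MP_pinv (k : nat) (G X : 'M[R]_k) : Prop :=
  G *m X *m G = G /\ X *m G *m X = X /\ (G *m X)^T = G *m X /\ (X *m G)^T = X *m G.

Definition MP_pinv (k : nat) (G : 'M[R]_k) : 'M[R]_k :=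
  epsilon (inhabits 0) (is_MP_pinv G).

Definition Gram (n m p : nat) (A : 'I_m -> 'M[R]_n) (Y : 'M[R]_(n, p)) : 'M[R]_m :=
  \matrix_(i, j) inner (A i *m Y) (A j *m Y).

Definition mu (n m p : nat) (A : 'I_m -> 'M[R]_n) (C : 'M[R]_n) (Y : 'M[R]_(n, p))
  : 'I_m -> R :=
  fun i => (MP_pinv (Gram A Y) *m \col_(j < m) Aop A (C *m Y *m Y^T) j) i 0.

Definition Smat (n m p : nat) (A : 'I_m -> 'M[R]_n) (C : 'M[R]_n) (Y : 'M[R]_(n, p))
  : 'M[R]_n := C - Aadj A (mu A C Y).

Definition critical (n m p : nat) (A : 'I_m -> 'M[R]_n) (b : 'I_m -> R)
  (C : 'M[R]_n) (Y : 'M[R]_(n, p)) : Prop :=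
  Mp A b Y /\ Smat A C Y *m Y = 0.

Definition second_order_critical (n m p : nat) (A : 'I_m -> 'M[R]_n) (b : 'I_m -> R)
  (C : 'M[R]_n) (Y : 'M[R]_(n, p)) : Prop :=
  critical A b C Y /\
  forall Yd : 'M[R]_(n, p), tangent A Y Yd -> 0 <= inner Yd (Smat A C Y *m Yd).

(* Lebesgue-null subsets of S^n, using the coordinates (X_ij)_{i <= j}
   identifying S^n with R^{n(n+1)/2}: N is covered, for every eps > 0, by a
   countable family of closed boxes of total volume <= eps. *)
Definition upper_idx (n : nat) := {ij : 'I_n * 'I_n | (ij.1 <= ij.2)%N}.

Definition sym_null (n : nat) (N : 'M[R]_n -> Prop) : Prop :=
  (forall X, N X -> sym_mx X) /\
  forall eps : R, 0 < eps ->
    exists lo hi : nat -> upper_idx n -> R,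
      (forall k ij, lo k ij <= hi k ij) /\
      (forall X, N X -> exists k, forall ij : upper_idx n,
          lo k ij <= X (val ij).1 (val ij).2 <= hi k ij) /\
      (forall K : nat, \sum_(k < K) \prod_(ij : upper_idx n) (hi k ij - lo k ij) <= eps).

End BMdefs.

(* A second-order critical point [Y] of the Burer-Monteiro problem has
   [S = S(Y)] symmetric with [S Y = 0] and [C = S + A^*(mu)].  If [rank Y < p],
   some [v <> 0] has [Y v = 0]; the tangent directions [u v^T] then show that
   [S] is positive semidefinite, so [mu] is a dual certificate and [Y], [Y Y^T]
   are optimal.  Otherwise [Y] has rank [p], and [C] lies in the set of costs
   [S + A^*(mu)] with [S] symmetric annihilating some rank-[p] matrix.  Choosing
   [p] independent rows of [Y], this set is covered by countably many Lipschitz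
   images of cubes of dimension
   [p (n - p) + (n - p)(n - p + 1)/2 + rank A < n (n + 1)/2],
   which is where [rank A < p (p + 1)/2] is used; such images are null. *)

From HB Require Import structures.
From mathcomp Require Import all_boot all_order all_algebra.
From mathcomp Require Import reals.
From mathcomp Require Import ring lra zify.
From Stdlib Require Import ClassicalEpsilon.
From Stdlib Require Cantor.

Set Implicit Arguments.
Unset Strict Implicit.
Unset Printing Implicit Defensive.

Import Order.TTheory GRing.Theory Num.Theory.
Local Open Scope ring_scope.

(** * Positive semidefinite matrices *)

Section Psd.
Variables (R : realType) (n : nat).
Implicit Types (S X : 'M[R]_n) (u v : 'cV[R]_n).

Definition bform X u v : R := (u^T *m X *m v) 0 0.

Lemma bformDl X u1 u2 v : bform X (u1 + u2) v = bform X u1 v + bform X u2 v.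
Proof. by rewrite /bform linearD /= !mulmxDl mxE. Qed.

Lemma bformDr X u v1 v2 : bform X u (v1 + v2) = bform X u v1 + bform X u v2.
Proof. by rewrite /bform mulmxDr mxE. Qed.

Lemma bformZl X c u v : bform X (c *: u) v = c * bform X u v.
Proof. by rewrite /bform linearZ /= -!scalemxAl mxE. Qed.

Lemma bformZr X c u v : bform X u (c *: v) = c * bform X u v.
Proof. by rewrite /bform -!scalemxAr mxE. Qed.

Lemma bformNl X u v : bform X (- u) v = - bform X u v.
Proof. by rewrite -scaleN1r bformZl mulN1r. Qed.

Lemma bformNr X u v : bform X u (- v) = - bform X u v.
Proof. by rewrite -scaleN1r bformZr mulN1r. Qed.

Definition bformE := (bformDl, bformDr, bformZl, bformZr, bformNl, bformNr).

Lemma bformC X u v : sym_mx X -> bform X u v = bform X v u.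
Proof.
move=> sX; rewrite /bform; transitivity ((v^T *m X *m u)^T 0 0); last by rewrite mxE.
by rewrite !trmx_mul trmxK sX mulmxA.
Qed.

Lemma sym_mxE X i j : sym_mx X -> X i j = X j i.
Proof. by move=> sX; rewrite -{1}sX mxE. Qed.

Lemma bform_delta X i j : bform X (delta_mx i 0) (delta_mx j 0) = X i j.
Proof. by rewrite /bform trmx_delta -rowE -colE !mxE. Qed.

Lemma psd_diag0_row0 X l j : psd X -> sym_mx X -> X l l = 0 -> X l j = 0.
Proof.
move=> pX sX Xll; apply/eqP/negPn/negP => Xlj.
pose s := - (X j j + 1) / (2 * X l j).
have sXlj : s * X l j = - (X j j + 1) / 2 by rewrite /s; field.
have := pX (s *: delta_mx l 0 + delta_mx j 0); rewrite -/(bform _ _ _).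
rewrite !bformE !bform_delta Xll (sym_mxE j l sX).
by clearbody s; lra.
Qed.

Lemma psd_schur_complement X l : psd X -> sym_mx X -> 0 < X l l ->
  psd (X - (X l l)^-1 *: (col l X *m (col l X)^T)).
Proof.
move=> pX sX Xll_gt0 v; set a := X l l; set x := col l X.
have xv : (x^T *m v) 0 0 = bform X (delta_mx l 0) v.
  by rewrite /bform /x colE trmx_mul trmx_delta sX.
have -> : (v^T *m (X - a^-1 *: (x *m x^T)) *m v) 0 0
          = bform X v v - a^-1 * ((x^T *m v) 0 0) ^+ 2.
  have vxxv : v^T *m (x *m x^T) *m v = (x^T *m v)^T *m (x^T *m v).
    by rewrite trmx_mul trmxK !mulmxA.
  rewrite mulmxBr mulmxBl -scalemxAr -scalemxAl vxxv.
  rewrite [(_ - _ : 'M[R]_1) 0 0]mxE [(- _ : 'M[R]_1) 0 0]mxE.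
  rewrite [(_ *: _ : 'M[R]_1) 0 0]mxE [(_^T *m _ : 'M[R]_1) 0 0]mxE.
  by rewrite big_ord1 [(_^T : 'M[R]_1) _ _]mxE expr2.
rewrite xv; set s := bform X (delta_mx l 0) v.
have := pX (v - (s / a) *: delta_mx l 0); rewrite -/(bform _ _ _).
rewrite !bformE bform_delta (bformC v _ sX) -/s -/a.
have -> : s / a * s = a^-1 * s ^+ 2 by rewrite mulrC mulrA mulrC expr2 mulrA.
have -> : s / a * - (s / a * a) = - (a^-1 * s ^+ 2) by field; rewrite gt_eqF.
lra.
Qed.

Lemma mxtrace_mul_rank1_ge0 S v : psd S -> 0 <= \tr (S *m (v *m v^T)).
Proof.
move=> pS; rewrite mulmxA mxtrace_mulC mulmxA /mxtrace big_ord1; exact: pS.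
Qed.

(* Induction on the rows that may be nonzero: a zero pivot has a zero row, and a
   positive pivot is split off as a rank-one term by its Schur complement. *)
Lemma mxtrace_mul_psd_ge0 S X : psd S -> psd X -> sym_mx X -> 0 <= \tr (S *m X).
Proof.
move=> pS.
suff rec k : forall X, psd X -> sym_mx X ->
    (forall i j : 'I_n, (k <= i)%N -> X i j = 0) -> 0 <= \tr (S *m X).
  by move=> pX sX; apply: (rec n) => // i j; rewrite leqNgt ltn_ord.
elim: k => [|k IH] {}X pX sX X0.
  have -> : X = 0 by apply/matrixP => i j; rewrite mxE X0.
  by rewrite mulmx0 linear0.
have [nk|kn] := leqP n k.
  by apply: IH => // i j; rewrite leqNgt (leq_trans (ltn_ord i)).
pose l := Ordinal kn.
have [Xll0|Xll_gt0] := eqVneq (X l l) 0.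
  apply: IH => // i j; rewrite leq_eqVlt => /orP [/eqP ki|]; last exact: X0.
  by rewrite (_ : i = l) ?(psd_diag0_row0 j pX sX) //; apply/val_inj.
have {}Xll_gt0 : 0 < X l l by rewrite lt_def Xll_gt0 -bform_delta pX.
set x := col l X.
have -> : X = (X - (X l l)^-1 *: (x *m x^T)) + (X l l)^-1 *: (x *m x^T).
  by rewrite subrK.
rewrite mulmxDr linearD /= -scalemxAr mxtraceZ.
apply: addr_ge0; last first.
  by apply: mulr_ge0; [rewrite invr_ge0 ltW | exact: mxtrace_mul_rank1_ge0].
apply: IH; first exact: psd_schur_complement.
  by rewrite /sym_mx linearB /= linearZ /= trmx_mul trmxK sX.
move=> i j; rewrite leq_eqVlt => /orP [/eqP ki|ki]; rewrite !mxE big_ord1 !mxE.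
  rewrite (_ : i = l); last exact: val_inj.
  by rewrite (sym_mxE j l sX) mulrA mulVf ?mul1r ?subrr ?gt_eqF.
by rewrite (X0 i j ki) (X0 i l ki) mul0r mulr0 subr0.
Qed.

End Psd.

Lemma rank_lt_kernel (F : fieldType) (k l : nat) (M : 'M[F]_(k, l)) :
  (\rank M < k)%N -> exists2 v : 'rV_k, v != 0 & v *m M = 0.
Proof.
move=> rM; have : kermx M != 0 by rewrite -mxrank_eq0 mxrank_ker subn_eq0 -ltnNge.
by case/rowV0Pn => v /sub_kermxP vM v0; exists v.
Qed.

Lemma exists_unit_rowsub (F : fieldType) n p (Y : 'M[F]_(n, p)) :
  \rank Y = p -> exists2 f : {ffun 'I_p -> 'I_n}, injective f & rowsub f Y \in unitmx.
Proof.
move=> rY; move: (maxrankfun Y) (@maxrankfun_inj _ _ _ Y) (maxrowsub_free Y).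
rewrite rY => g g_inj g_free; exists (finfun g).
  by move=> i j; rewrite !ffunE => /g_inj.
by rewrite -row_free_unit (eq_rowsub _ (ffunE g)).
Qed.

(** * Optimality certificates *)

Section Certificate.
Variables (R : realType) (n m p : nat) (A : 'I_m -> 'M[R]_n) (b : 'I_m -> R).
Hypothesis Asym : forall i, sym_mx (A i).

Lemma sym_Aadj nu : sym_mx (Aadj A nu).
Proof.
rewrite /sym_mx /Aadj linear_sum /=; apply: eq_bigr => i _.
by rewrite linearZ /= Asym.
Qed.

Lemma mxtrace_Aadj_mul nu (X : 'M[R]_n) :
  \tr (Aadj A nu *m X) = \sum_i nu i * inner (A i) X.
Proof.
rewrite /inner /Aadj mulmx_suml linear_sum /=; apply: eq_bigr => i _.
by rewrite -scalemxAl mxtraceZ Asym.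
Qed.

Lemma sym_mulmx_tr (Y : 'M[R]_(n, p)) : sym_mx (Y *m Y^T).
Proof. by rewrite /sym_mx trmx_mul trmxK. Qed.

Lemma psd_mulmx_tr (Y : 'M[R]_(n, p)) : psd (Y *m Y^T).
Proof.
move=> v; rewrite !mulmxA -(mulmxA _ Y^T) -[Y^T *m v]trmxK trmx_mul trmxK mxE.
by apply: sumr_ge0 => i _; rewrite [_^T _ _]mxE -expr2 sqr_ge0.
Qed.

Lemma gcostE (C : 'M[R]_n) (Y : 'M[R]_(n, p)) :
  sym_mx C -> gcost C Y = inner C (Y *m Y^T).
Proof.
move=> sC; rewrite /gcost /inner trmx_mul mxtrace_mulC sC mulmxA.
by rewrite mxtrace_mulC.
Qed.

(* Weak duality, with [S] the dual slack and [S Y = 0] complementary slackness. *)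
Lemma dual_certificate_optimal (C S : 'M[R]_n) nu (Y : 'M[R]_(n, p)) :
  sym_mx C -> C = S + Aadj A nu -> psd S -> S *m Y = 0 -> Mp A b Y ->
  P_optimal A b C Y /\ SDP_optimal A b C (Y *m Y^T).
Proof.
move=> sC eC pS SY hY.
have feasY : SDP_feasible A b (Y *m Y^T).
  by split; [exact: sym_mulmx_tr | split; [exact: psd_mulmx_tr | exact: hY]].
have innerC X : Aop A X = b -> inner C X = \tr (S *m X) + \sum_i nu i * b i.
  move=> hX; rewrite /inner sC {1}eC mulmxDl linearD /= mxtrace_Aadj_mul.
  congr (_ + _); apply: eq_bigr => i _.
  by rewrite -hX.
have optSDP : SDP_optimal A b C (Y *m Y^T).
  split => // X [sX [pX hX]].
  rewrite !innerC // mulmxA SY mul0mx linear0 add0r lerDr.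
  exact: mxtrace_mul_psd_ge0.
split => //; split => // Z hZ.
rewrite !gcostE //; apply: optSDP.2.
by split; [exact: sym_mulmx_tr | split; [exact: psd_mulmx_tr | exact: hZ]].
Qed.

(* Along [u v] with [Y v^T = 0] the constraints do not move, so the
   curvature condition sees every direction [u]. *)
Lemma psd_of_rank_deficient (S : 'M[R]_n) (Y : 'M[R]_(n, p)) : (\rank Y < p)%N ->
  (forall Yd, tangent A Y Yd -> 0 <= inner Yd (S *m Yd)) -> psd S.
Proof.
move=> rY hS u.
have [v v0 vY] : exists2 v : 'rV_p, v != 0 & v *m Y^T = 0.
  by apply: rank_lt_kernel; rewrite mxrank_tr.
have tg : tangent A Y (u *m v).
  move=> i; rewrite /inner mulmxA mxtrace_mulC trmx_mul Asym !mulmxA vY.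
  by rewrite !mul0mx linear0.
have vv_gt0 : 0 < (v *m v^T) 0 0.
  have vv_ge0 j : 0 <= v 0 j * v^T j 0 by rewrite mxE -expr2 sqr_ge0.
  rewrite mxE lt_def sumr_ge0 // andbT psumr_eq0 //.
  apply: contra v0 => /allP v_eq0; apply/eqP/rowP => j.
  by have := v_eq0 j (mem_index_enum j); rewrite mxE -expr2 sqrf_eq0 mxE => /eqP.
have := hS _ tg.
have -> : inner (u *m v) (S *m (u *m v)) = (u^T *m S *m u) 0 0 * (v *m v^T) 0 0.
  rewrite /inner trmx_mul -!mulmxA mxtrace_mulC !mulmxA -(mulmxA _ v).
  by rewrite /mxtrace big_ord1 mxE big_ord1.
by rewrite pmulr_lge0.
Qed.

End Certificate.

(** * Null sets *)

Section Sums.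
Variable R : realType.

Lemma sum_cantor_le (g : nat -> nat -> R) K : (forall a b, 0 <= g a b) ->
  \sum_(k < K) g (Cantor.of_nat k).1 (Cantor.of_nat k).2
    <= \sum_(a < K) \sum_(b < K) g a b.
Proof.
move=> g_ge0.
have of_nat_lt (k : 'I_K) :
    ((Cantor.of_nat k).1 < K)%N /\ ((Cantor.of_nat k).2 < K)%N.
  have := Cantor.to_nat_non_decreasing (Cantor.of_nat k).1 (Cantor.of_nat k).2.
  rewrite -surjective_pairing Cantor.cancel_to_of.
  by case: (Cantor.of_nat k) => a b /=; have := ltn_ord k; lia.
pose e k : 'I_K * 'I_K := (Ordinal (of_nat_lt k).1, Ordinal (of_nat_lt k).2).
have e_inj : injective e.
  move=> k k' [ek1 ek2]; apply/val_inj/Cantor.of_nat_inj.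
  rewrite [Cantor.of_nat k]surjective_pairing [Cantor.of_nat k']surjective_pairing.
  by rewrite ek1 ek2.
rewrite pair_big /=.
have -> : \sum_(k < K) g (Cantor.of_nat k).1 (Cantor.of_nat k).2
          = \sum_(x in [set e k | k in 'I_K]) g x.1 x.2.
  by rewrite big_imset /=; last exact: in2W.
rewrite [X in _ <= X](bigID (mem [set e k | k in 'I_K])) /= lerDl.
exact: sumr_ge0.
Qed.

Lemma sum_geometric_le (eps : R) K : 0 <= eps ->
  \sum_(j < K) eps / 2 ^+ j.+1 <= eps.
Proof.
move=> eps_ge0.
have -> : \sum_(j < K) eps / 2 ^+ j.+1 = eps - eps / 2 ^+ K.
  elim: K => [|K IH]; first by rewrite big_ord0 expr0 divr1 subrr.
  rewrite big_ord_recr /= IH exprS.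
  by field; rewrite expf_neq0 // pnatr_eq0.
by rewrite lerBlDr lerDl divr_ge0 // exprn_ge0.
Qed.

Lemma sum_prefix_le (c : R) N K : 0 <= c ->
  \sum_(k < K) (if (k < N)%N then c else 0) <= N%:R * c.
Proof.
move=> c_ge0; suff -> : \sum_(k < K) (if (k < N)%N then c else 0) = (minn K N)%:R * c.
  by rewrite ler_wpM2r // ler_nat geq_minr.
elim: K => [|K IH]; first by rewrite big_ord0 min0n mul0r.
rewrite big_ord_recr /= IH; case: ltnP => KN.
  have -> : minn K.+1 N = K.+1 by lia.
  by rewrite -addn1 natrD mulrDl mul1r.
by rewrite addr0 (_ : minn K.+1 N = N) //; lia.
Qed.

End Sums.

Section Cube.
Variable R : realType.

Definition cube (I : Type) (r : R) (x : I -> R) := forall i, `|x i| <= r.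

Lemma cube_bound (I : finType) (x : I -> R) : exists N : nat, cube N.+1%:R x.
Proof.
have sum_ge0 : 0 <= \sum_i `|x i| by apply: sumr_ge0.
exists (Num.Def.archi_bound (\sum_i `|x i|)) => i.
apply: (@le_trans _ _ (\sum_i `|x i|)); first by rewrite (bigD1 i) //= lerDl sumr_ge0.
by rewrite (le_trans (ltW (archi_boundP sum_ge0))) // ler_nat.
Qed.

(* The centres of the [k] intervals of length [2 r / k] tiling [[-r, r]]. *)
Definition grid_center (k : nat) (r : R) (s : nat) : R :=
  - r + (2 * s + 1)%:R * (r / k%:R).

Lemma grid_center_bound k r (s : 'I_k) : 0 < r -> `|grid_center k r s| <= r.
Proof.
move=> r_gt0; have k_gt0 : (0 < k)%N by apply: leq_ltn_trans (ltn_ord s).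
have h_gt0 : 0 < r / k%:R by rewrite divr_gt0 ?ltr0n.
have c_ge0 : 0 <= (2 * s + 1)%:R * (r / k%:R) by rewrite mulr_ge0 ?ler0n ?ltW.
have c_le : (2 * s + 1)%:R * (r / k%:R) <= 2 * r.
  apply: (@le_trans _ _ ((2 * k)%:R * (r / k%:R))).
    by apply: ler_wpM2r; [exact: ltW | rewrite ler_nat; have := ltn_ord s; lia].
  by rewrite natrM -mulrA [_%:R * (r / _)]mulrC divfK // pnatr_eq0 -lt0n.
by rewrite /grid_center ler_norml; apply/andP; split; lra.
Qed.

Lemma grid_center_near k r t : (0 < k)%N -> 0 < r -> `|t| <= r ->
  exists s : 'I_k, `|t - grid_center k r s| <= r / k%:R.
Proof.
move=> k_gt0 r_gt0 t_le; set h := r / k%:R.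
have kh : k%:R * h = r by rewrite /h mulrC divfK // pnatr_eq0 -lt0n.
have h_gt0 : 0 < h by rewrite /h divr_gt0 // ltr0n.
move: t_le; rewrite ler_norml => /andP [t_ge t_le].
pose P s := (s < k)%N && (- r + (2 * s)%:R * h <= t).
have exP : exists s, P s by exists 0%N; rewrite /P k_gt0 mul0r addr0.
have ubP s : P s -> (s <= k.-1)%N by case/andP; lia.
have [s /andP [sk s_le] s_max] := ex_maxnP exP ubP.
exists (Ordinal sk); rewrite /grid_center -/h /=.
have le_s : t <= - r + (2 * s + 2)%:R * h.
  have [s1k|ks1] := ltnP s.+1 k.
    have : ~~ P s.+1 by apply/negP => /s_max; lia.
    rewrite /P s1k /= -ltNge => /ltW.
    by have -> : (2 * s.+1 = 2 * s + 2)%N by lia.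
  have -> : (2 * s + 2 = 2 * k)%N by lia.
  by rewrite natrM -mulrA kh; lra.
rewrite ?natrD ?natrM in s_le le_s *.
by rewrite ler_norml; apply/andP; split; lra.
Qed.

Lemma cube_grid (I : finType) k r (x : I -> R) : (0 < k)%N -> 0 < r -> cube r x ->
  exists s : {ffun I -> 'I_k}, forall i, `|x i - grid_center k r (s i)| <= r / k%:R.
Proof.
move=> k_gt0 r_gt0 x_cube.
have [s sP] := fin_all_exists (fun i => grid_center_near k_gt0 r_gt0 (x_cube i)).
by exists (finfun s) => i; rewrite ffunE.
Qed.

Lemma natr_exp_div_le (c : R) k d e : 0 <= c -> (0 < k)%N -> (d < e)%N ->
  (k ^ d)%:R * (c / k%:R ^+ e) <= c / k%:R.
Proof.
move=> c_ge0 k_gt0 de; have k_pos : 0 < k%:R :> R by rewrite ltr0n.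
rewrite -(subnKC (ltnW de)) exprD natrX.
have a_gt0 : 0 < k%:R ^+ d :> R by rewrite exprn_gt0.
have b_gt0 : 0 < k%:R ^+ (e - d) :> R by rewrite exprn_gt0.
rewrite (_ : _ * _ = c / k%:R ^+ (e - d)); last by field; rewrite !gt_eqF.
apply: ler_wpM2l => //; rewrite lef_pV2 ?posrE //.
by rewrite ler_eXnr ?subn_gt0 ?ler1n.
Qed.

End Cube.

Section NullSets.
Variables (R : realType) (J : finType).
Implicit Types (P Q : (J -> R) -> Prop) (lo hi : nat -> J -> R).

Definition box_cover P eps lo hi : Prop :=
  [/\ forall k j, lo k j <= hi k j,
      forall y, P y -> exists k, forall j, lo k j <= y j <= hi k j
    & forall K, \sum_(k < K) \prod_j (hi k j - lo k j) <= eps].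

Definition nullset P : Prop :=
  forall eps : R, 0 < eps -> exists lo hi, box_cover P eps lo hi.

Lemma nullsetS P Q : (forall y, P y -> Q y) -> nullset Q -> nullset P.
Proof.
move=> PQ nQ eps eps_gt0; have [lo [hi [le_lohi cover vol]]] := nQ eps eps_gt0.
by exists lo, hi; split=> // y /PQ /cover.
Qed.

(* Over an empty index type every box has volume [1], so no set would be null. *)
Variable j0 : J.

Lemma volume_empty_box (c : J -> R) : \prod_j (c j - c j) = 0.
Proof. by rewrite (bigD1 j0) //= subrr mul0r. Qed.

(* The [t]-th set gets the budget [eps / 2 ^ (pickle t + 1)], and all the
   boxes are enumerated along the Cantor pairing. *)
Lemma nullset_countable_union (T : countType) (P : T -> (J -> R) -> Prop) :
  (forall t, nullset (P t)) -> nullset (fun y => exists t, P t y).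
Proof.
move=> nP eps eps_gt0.
have eps_t (t : T) : 0 < eps / 2 ^+ (pickle t).+1 by rewrite divr_gt0 ?exprn_gt0.
pose cover t (lohi : (nat -> J -> R) * (nat -> J -> R)) :=
  box_cover (P t) (eps / 2 ^+ (pickle t).+1) lohi.1 lohi.2.
pose B t := epsilon (inhabits ((fun _ _ => 0), (fun _ _ => 0))) (cover t).
have B_cover t : cover t (B t).
  have [lo [hi lohi_cover]] := nP t _ (eps_t t).
  by apply: epsilon_spec; exists (lo, hi).
pose lo' a b : J -> R := if @pickle_inv T a is Some t then (B t).1 b else fun=> 0.
pose hi' a b : J -> R := if @pickle_inv T a is Some t then (B t).2 b else fun=> 0.
pose g a b := \prod_j (hi' a b j - lo' a b j).
have le_lohi' a b j : lo' a b j <= hi' a b j.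
  by rewrite /lo' /hi'; case: pickle_inv => [t|//]; case: (B_cover t).
exists (fun k => lo' (Cantor.of_nat k).1 (Cantor.of_nat k).2).
exists (fun k => hi' (Cantor.of_nat k).1 (Cantor.of_nat k).2).
split=> [k j|y [t Pty]|K]; first exact: le_lohi'.
  have [_ Pt_cover _] := B_cover t; have [b yb] := Pt_cover y Pty.
  exists (Cantor.to_nat (pickle t, b)).
  by rewrite Cantor.cancel_of_to /lo' /hi' pickleK_inv.
have g_ge0 a b : 0 <= g a b by apply: prodr_ge0 => j _; rewrite subr_ge0.
apply: le_trans (sum_cantor_le K g_ge0) _.
apply: le_trans (sum_geometric_le K (ltW eps_gt0)); apply: ler_sum => a _.
rewrite /g /lo' /hi'; case Ea: pickle_inv => [t|]; last first.
  by rewrite big1 ?divr_ge0 ?exprn_ge0 ?ltW // => b _; exact: volume_empty_box.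
have <- : pickle t = a by have := @pickle_invK T a; rewrite Ea.
by case: (B_cover t).
Qed.

(* Cutting the cube into [k ^ #|I|] cells of half-width [r / k], the image
   boxes have total volume [k ^ #|I| * (2 L r / k) ^ #|J| <= (2 L r) ^ #|J| / k]. *)
Lemma nullset_lipschitz_image (I : finType) (F : (I -> R) -> J -> R) (r L : R) :
  (#|I| < #|J|)%N -> 0 < r -> 0 <= L ->
  (forall x y d, cube r x -> cube r y -> 0 <= d -> (forall i, `|x i - y i| <= d) ->
     forall j, `|F x j - F y j| <= L * d) ->
  nullset (fun z => exists x, cube r x /\ forall j, z j = F x j).
Proof.
move=> IJ r_gt0 L_ge0 F_lip eps eps_gt0.
pose c := (2 * L * r) ^+ #|J|.
have c_ge0 : 0 <= c by rewrite exprn_ge0 // !mulr_ge0 // ltW.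
pose k := (Num.Def.archi_bound (c / eps)).+1.
have c_lt : c / eps < k%:R.
  apply: lt_le_trans (archi_boundP _) _; first by rewrite divr_ge0 // ltW.
  by rewrite ler_nat leqnSn.
pose h := r / k%:R.
have h_gt0 : 0 < h by rewrite divr_gt0 // ltr0n.
have Lh_ge0 : 0 <= L * h by rewrite mulr_ge0 // ltW.
pose S := {ffun I -> 'I_k}.
pose center (s : S) i := grid_center k r (s i).
pose cell m := center (nth [ffun=> ord0] (enum S) m).
pose lo m j := if (m < #|S|)%N then F (cell m) j - L * h else 0.
pose hi m j := if (m < #|S|)%N then F (cell m) j + L * h else 0.
exists lo, hi; split=> [m j|z [x [x_cube zx]]|K].
- by rewrite /lo /hi; case: ifP => // _; lra.
- have [s xs] := @cube_grid R I k r x (ltn0Sn _) r_gt0 x_cube.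
  have s_enum : (index s (enum S) < #|S|)%N by rewrite cardE index_mem mem_enum.
  exists (index s (enum S)) => j; rewrite /lo /hi /cell s_enum nth_index ?mem_enum //.
  have center_cube i : `|center s i| <= r by exact: grid_center_bound.
  have := F_lip x (center s) h x_cube center_cube (ltW h_gt0) xs j.
  by rewrite zx ler_norml => /andP [? ?]; apply/andP; split; lra.
have vol m : \prod_j (hi m j - lo m j)
             = if (m < #|S|)%N then (2 * L * h) ^+ #|J| else 0.
  rewrite /lo /hi; case: ifP => _; last exact: volume_empty_box.
  by rewrite -prodr_const; apply: eq_bigr => j _; ring.
rewrite (eq_bigr _ (fun (m : 'I_K) _ => vol m)).
apply: le_trans (sum_prefix_le _ _ (exprn_ge0 _ _)) _; first by rewrite -mulrA mulr_ge0.
rewrite card_ffun card_ord /h mulrA expr_div_n.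
apply: le_trans (natr_exp_div_le c_ge0 (ltn0Sn _) IJ) _.
by move: c_lt; rewrite ltr_pdivrMr // ler_pdivrMr ?ltr0n // mulrC => /ltW.
Qed.

End NullSets.

(** * Lipschitz maps on cubes *)

Section CubeLipschitz.
Variables (R : realType) (I : finType) (r : R).
Implicit Types (f g : (I -> R) -> R).

(* Boundedness is carried along so that products stay Lipschitz. *)
Definition cube_lipschitz f := exists K L : R, [/\ 0 <= K, 0 <= L,
  forall x, cube r x -> `|f x| <= K &
  forall x y d, cube r x -> cube r y -> (forall i, `|x i - y i| <= d) ->
    `|f x - f y| <= L * d].

Lemma eq_cube_lipschitz f g : f =1 g -> cube_lipschitz f -> cube_lipschitz g.
Proof.
move=> fg [K [L [K_ge0 L_ge0 f_bd f_lip]]]; exists K, L; split=> // [x|x y d].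
  by rewrite -fg; exact: f_bd.
by rewrite -!fg; exact: f_lip.
Qed.

Lemma cube_lipschitz_cst c : cube_lipschitz (fun=> c).
Proof. by exists `|c|, 0; split=> // x y d _ _ _; rewrite subrr normr0 mul0r. Qed.

Lemma cube_lipschitz_coord i : cube_lipschitz (fun x => x i).
Proof.
exists `|r|, 1; split=> // [x x_cube|x y d _ _ xy]; last by rewrite mul1r.
exact: le_trans (x_cube i) (ler_norm r).
Qed.

Lemma cube_lipschitzD f g :
  cube_lipschitz f -> cube_lipschitz g -> cube_lipschitz (fun x => f x + g x).
Proof.
move=> [Kf [Lf [Kf_ge0 Lf_ge0 f_bd f_lip]]] [Kg [Lg [Kg_ge0 Lg_ge0 g_bd g_lip]]].
exists (Kf + Kg), (Lf + Lg); split=> [||x x_cube|x y d x_cube y_cube xy].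
- exact: addr_ge0.
- exact: addr_ge0.
- exact: le_trans (ler_normD _ _) (lerD (f_bd x x_cube) (g_bd x x_cube)).
have -> : f x + g x - (f y + g y) = (f x - f y) + (g x - g y) by ring.
rewrite mulrDl.
apply: le_trans (ler_normD _ _) _.
exact: lerD (f_lip x y d x_cube y_cube xy) (g_lip x y d x_cube y_cube xy).
Qed.

Lemma cube_lipschitzM f g :
  cube_lipschitz f -> cube_lipschitz g -> cube_lipschitz (fun x => f x * g x).
Proof.
move=> [Kf [Lf [Kf_ge0 Lf_ge0 f_bd f_lip]]] [Kg [Lg [Kg_ge0 Lg_ge0 g_bd g_lip]]].
exists (Kf * Kg), (Kf * Lg + Kg * Lf); split=> [||x x_cube|x y d x_cube y_cube xy].
- exact: mulr_ge0.
- by rewrite addr_ge0 ?mulr_ge0.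
- by rewrite normrM ler_pM ?f_bd ?g_bd.
have -> : f x * g x - f y * g y = f x * (g x - g y) + g y * (f x - f y) by ring.
apply: le_trans (ler_normD _ _) _; rewrite mulrDl -!mulrA !normrM.
by apply: lerD; rewrite ler_pM ?f_bd ?g_bd ?f_lip ?g_lip.
Qed.

Lemma cube_lipschitz_sum (T : Type) (s : seq T) (F : T -> (I -> R) -> R) :
  (forall t, cube_lipschitz (F t)) -> cube_lipschitz (fun x => \sum_(t <- s) F t x).
Proof.
move=> F_lip; elim: s => [|t s IH].
  by apply: eq_cube_lipschitz (cube_lipschitz_cst 0) => x; rewrite big_nil.
apply: eq_cube_lipschitz (cube_lipschitzD (F_lip t) IH) => x.
by rewrite big_cons.
Qed.

Lemma cube_lipschitz_uniform (J : finType) (F : (I -> R) -> J -> R) :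
  (forall j, cube_lipschitz (fun x => F x j)) ->
  exists2 L : R, 0 <= L & forall x y d, cube r x -> cube r y -> 0 <= d ->
    (forall i, `|x i - y i| <= d) -> forall j, `|F x j - F y j| <= L * d.
Proof.
move=> F_lip.
have /fin_all_exists [L L_lip] : forall j, exists L : R, 0 <= L /\ forall x y d,
    cube r x -> cube r y -> (forall i, `|x i - y i| <= d) ->
    `|F x j - F y j| <= L * d.
  by move=> j; have [_ [L [_ L_ge0 _ Lj]]] := F_lip j; exists L.
have L_ge0 j : 0 <= L j by case: (L_lip j).
exists (\sum_j L j) => [|x y d x_cube y_cube d_ge0 xy j]; first exact: sumr_ge0.
have [_ Lj] := L_lip j; apply: le_trans (Lj x y d x_cube y_cube xy) _.
by rewrite ler_wpM2r // (bigD1 j) //= lerDl sumr_ge0.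
Qed.

Definition cube_lipschitz_mx k l (F : (I -> R) -> 'M[R]_(k, l)) :=
  forall i j, cube_lipschitz (fun x => F x i j).

Lemma cube_lipschitz_mx_cst k l (M : 'M[R]_(k, l)) : cube_lipschitz_mx (fun=> M).
Proof. by move=> i j; exact: cube_lipschitz_cst. Qed.

Lemma cube_lipschitz_mxD k l (F G : (I -> R) -> 'M[R]_(k, l)) :
  cube_lipschitz_mx F -> cube_lipschitz_mx G -> cube_lipschitz_mx (fun x => F x + G x).
Proof.
move=> F_lip G_lip i j; apply: eq_cube_lipschitz (cube_lipschitzD (F_lip i j) (G_lip i j)).
by move=> x; rewrite mxE.
Qed.

Lemma cube_lipschitz_mxM k l q
    (F : (I -> R) -> 'M[R]_(k, l)) (G : (I -> R) -> 'M[R]_(l, q)) :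
  cube_lipschitz_mx F -> cube_lipschitz_mx G -> cube_lipschitz_mx (fun x => F x *m G x).
Proof.
move=> F_lip G_lip i j.
have FG_lip t := cube_lipschitzM (F_lip i t) (G_lip t j).
by apply: eq_cube_lipschitz (cube_lipschitz_sum _ FG_lip) => x; rewrite mxE.
Qed.

Lemma cube_lipschitz_mx_tr k l (F : (I -> R) -> 'M[R]_(k, l)) :
  cube_lipschitz_mx F -> cube_lipschitz_mx (fun x => (F x)^T).
Proof. by move=> F_lip i j; apply: eq_cube_lipschitz (F_lip j i) => x; rewrite mxE. Qed.

Lemma cube_lipschitz_mx_sum k l (T : Type) (s : seq T)
    (F : T -> (I -> R) -> 'M[R]_(k, l)) :
  (forall t, cube_lipschitz_mx (F t)) -> cube_lipschitz_mx (fun x => \sum_(t <- s) F t x).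
Proof.
move=> F_lip i j; apply: eq_cube_lipschitz (cube_lipschitz_sum s (fun t => F_lip t i j)).
by move=> x; rewrite summxE.
Qed.

Lemma cube_lipschitz_mxZ k l f (M : 'M[R]_(k, l)) :
  cube_lipschitz f -> cube_lipschitz_mx (fun x => f x *: M).
Proof.
move=> f_lip i j.
have fM_lip := cube_lipschitzM f_lip (cube_lipschitz_cst (M i j)).
by apply: eq_cube_lipschitz fM_lip => x; rewrite mxE.
Qed.

End CubeLipschitz.

(** * Costs with a full-rank critical point *)

Lemma card_upper_pairs n (T : {set 'I_n}) :
  (2 * #|[set ac : 'I_n * 'I_n | [&& (ac.1 <= ac.2)%N, ac.1 \in T & ac.2 \in T]]|
   = #|T| * #|T|.+1)%N.
Proof.
set U := [set ac | _]; set Lw := [set (ac.2, ac.1) | ac in U].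
have swap_inj : injective (fun ac : 'I_n * 'I_n => (ac.2, ac.1)).
  by move=> [a c] [? ?] [-> ->].
have UL : U :|: Lw = setX T T.
  apply/setP => -[a c]; rewrite !inE; apply/idP/andP.
    by case/orP => [/and3P [] | /imsetP [[a' c'] /[!inE] /and3P [_ ? ?] [-> ->]]].
  case=> aT cT; case: (leqP a c) => [ac|/ltnW ca]; first by rewrite aT cT.
  by apply/orP; right; apply/imsetP; exists (c, a) => //; rewrite inE ca aT cT.
have UiL : U :&: Lw = [set (a, a) | a in T].
  apply/setP => -[a c]; rewrite !inE; apply/andP/imsetP.
    case=> /and3P [ac _ _] /imsetP [[a' c'] /[!inE] /and3P [ca _ c'T] [ea ec]].
    move: ac; rewrite ea ec /= => ac.
    by exists c'; rewrite // (_ : a' = c') //; apply/val_inj/eqP; rewrite eqn_leq ac ca.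
  case=> a' a'T [-> ->]; rewrite leqnn a'T; split=> //.
  by apply/imsetP; exists (a', a'); rewrite ?inE ?leqnn ?a'T.
have card_Lw : #|Lw| = #|U| by rewrite card_imset.
have card_diag : #|[set (a, a) | a in T]| = #|T| by rewrite card_imset // => ? ? [].
have := cardsUI U Lw; rewrite UL UiL cardsX card_Lw card_diag => card_U.
by rewrite mulnS [RHS]addnC mul2n -addnn; apply/esym; exact: card_U.
Qed.

Section Parametrization.
Variables (R : realType) (n m p : nat) (A : 'I_m -> 'M[R]_n).
Variable f : {ffun 'I_p -> 'I_n}.
Hypothesis f_inj : injective f.

Definition Amx := \matrix_(i < m) mxvec (A i).

Definition sel : 'M[R]_(p, n) := rowsub f 1%:M.
Definition sel_compl : 'M[R]_n := 1%:M - sel^T *m sel.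

Lemma sel_mul q (W : 'M[R]_(n, q)) : sel *m W = rowsub f W.
Proof. by rewrite /sel mul_rowsub_mx mul1mx. Qed.

Lemma sel_mul_tr : sel *m sel^T = 1%:M.
Proof. by rewrite sel_mul; apply/matrixP => i j; rewrite !mxE (inj_eq f_inj) eq_sym. Qed.

Lemma sel_mul_compl : sel *m sel_compl = 0.
Proof. by rewrite /sel_compl mulmxBr mulmx1 mulmxA sel_mul_tr mul1mx subrr. Qed.

Lemma sym_sel_compl : sym_mx sel_compl.
Proof. by rewrite /sym_mx /sel_compl linearB /= trmx1 trmx_mul trmxK. Qed.

Lemma sel_mul_eq0 q (W : 'M[R]_(n, q)) : sel *m W = 0 -> forall j b, W (f j) b = 0.
Proof. by rewrite sel_mul => /matrixP W0 j b; have := W0 j b; rewrite !mxE. Qed.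

(* If the rows [f] of [Y] are independent, [Z := Y (Y_f)^-1] satisfies [sel Z = 1],
   so [P := 1 - Z sel] fixes [S] on both sides while [sel_compl P = P]. *)
Lemma sym_annihilator_factor (S : 'M[R]_n) (Y : 'M[R]_(n, p)) :
  sym_mx S -> S *m Y = 0 -> rowsub f Y \in unitmx ->
  exists2 X : 'M[R]_(n, p), sel *m X = 0 &
    S = (sel_compl + X *m sel)^T *m (sel_compl *m S *m sel_compl) *m (sel_compl + X *m sel).
Proof.
move=> sS SY Yf_unit; set Z := Y *m invmx (rowsub f Y).
have selZ : sel *m Z = 1%:M by rewrite mulmxA sel_mul mulmxV.
set P := 1%:M - Z *m sel.
have SP : S *m P = S by rewrite mulmxBr mulmx1 !mulmxA SY !mul0mx subr0.
have PtS : P^T *m S = S by rewrite -[in LHS]sS -trmx_mul SP.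
have DP : sel_compl *m P = P.
  rewrite /sel_compl mulmxBl mul1mx -mulmxA mulmxBr mulmx1 mulmxA selZ mul1mx.
  by rewrite subrr mulmx0 subr0.
exists (- (sel_compl *m Z)).
  by rewrite mulmxN mulmxA sel_mul_compl mul0mx oppr0.
have -> : sel_compl + - (sel_compl *m Z) *m sel = P.
  by rewrite -[RHS]DP /P mulmxBr mulmx1 mulNmx !mulmxA.
have -> : P^T *m (sel_compl *m S *m sel_compl) *m P
          = (sel_compl *m P)^T *m S *m (sel_compl *m P).
  by rewrite trmx_mul sym_sel_compl !mulmxA.
by rewrite DP PtS SP.
Qed.

(* Coordinates of [param_map]: the rows outside [f] of a block [X], the upper
   triangle of a symmetric [M] supported outside [f], and the coefficients of a
   vector in the range of [A^*]. *)
Definition block_idx := {it : 'I_p * 'I_n | it.2 \notin codom f}.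
Definition sym_idx :=
  {ac : 'I_n * 'I_n | [&& (ac.1 <= ac.2)%N, ac.1 \notin codom f & ac.2 \notin codom f]}.
Definition param_idx := (block_idx + sym_idx + 'I_(\rank Amx))%type.

Definition Xpar (x : block_idx -> R) : 'M[R]_(n, p) :=
  \matrix_(t, i) if insub (i, t) is Some k then x k else 0.

Definition Mpar (x : sym_idx -> R) : 'M[R]_n :=
  \matrix_(a, c) if insub (a, c) is Some k then x k
                 else if insub (c, a) is Some k then x k else 0.

Definition Vpar (x : 'I_(\rank Amx) -> R) : 'M[R]_n :=
  \sum_k x k *: vec_mx (row k (row_base Amx)).

Definition Qpar (x : param_idx -> R) : 'M[R]_n :=
  sel_compl + Xpar (x \o inl \o inl) *m sel.

Definition param_map (x : param_idx -> R) : 'M[R]_n :=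
  (Qpar x)^T *m Mpar (x \o inl \o inr) *m Qpar x + Vpar (x \o inr).

Lemma Xpar_onto (X : 'M[R]_(n, p)) : sel *m X = 0 -> exists x, Xpar x = X.
Proof.
move=> /sel_mul_eq0 X0; exists (fun k => X (val k).2 (val k).1).
apply/matrixP => t i; rewrite mxE; case: insubP => [k _ -> //|] /=.
by rewrite negbK => /codomP [j ->]; rewrite X0.
Qed.

Lemma Mpar_onto (M : 'M[R]_n) : sym_mx M -> sel *m M = 0 -> exists x, Mpar x = M.
Proof.
move=> sM /sel_mul_eq0 M0; exists (fun k => M (val k).1 (val k).2).
apply/matrixP => a c; rewrite mxE; case: insubP => [k _ -> //|/= not_ac].
case: insubP => [k _ -> /=|/= not_ca]; first exact: sym_mxE.
have [/codomP [j ->]|a_off] := boolP (a \in codom f); first by rewrite M0.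
have [/codomP [j ->]|c_off] := boolP (c \in codom f); first by rewrite sym_mxE ?M0.
by move: not_ac not_ca; rewrite a_off c_off !andbT; case: leqP => // /ltnW ->.
Qed.

Lemma Vpar_onto (V : 'M[R]_n) : (mxvec V <= Amx)%MS -> exists x, Vpar x = V.
Proof.
rewrite -(eq_row_base Amx) => /submxP [w Vw]; exists (fun k => w 0 k).
rewrite /Vpar -[V]mxvecK Vw mulmx_sum_row linear_sum.
by apply: eq_bigr => k _; rewrite linearZ.
Qed.

Lemma param_map_onto (X : 'M[R]_(n, p)) (M V : 'M[R]_n) :
  sel *m X = 0 -> sym_mx M -> sel *m M = 0 -> (mxvec V <= Amx)%MS ->
  exists x, param_map x = (sel_compl + X *m sel)^T *m M *m (sel_compl + X *m sel) + V.
Proof.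
move=> /Xpar_onto [xX <-] sM /(Mpar_onto sM) [xM <-] /Vpar_onto [xV <-].
by exists (fun k => match k with
  | inl (inl k) => xX k | inl (inr k) => xM k | inr k => xV k end).
Qed.

Lemma Aadj_rowspace nu : (mxvec (Aadj A nu) <= Amx)%MS.
Proof.
apply/submxP; exists (\row_i nu i).
rewrite mulmx_sum_row /Aadj linear_sum /=; apply: eq_bigr => i _.
by rewrite linearZ /= mxE rowK.
Qed.

Lemma param_map_cover (C S : 'M[R]_n) (Y : 'M[R]_(n, p)) nu :
  sym_mx S -> S *m Y = 0 -> rowsub f Y \in unitmx -> C = S + Aadj A nu ->
  exists x, C = param_map x.
Proof.
move=> sS SY Yf_unit ->; have [X selX eS] := sym_annihilator_factor sS SY Yf_unit.
have sM : sym_mx (sel_compl *m S *m sel_compl).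
  by rewrite /sym_mx !trmx_mul sym_sel_compl sS mulmxA.
have selM : sel *m (sel_compl *m S *m sel_compl) = 0.
  by rewrite !mulmxA sel_mul_compl !mul0mx.
have [x ex] := param_map_onto selX sM selM (Aadj_rowspace nu).
by exists x; rewrite ex -eS.
Qed.

Lemma cube_lipschitz_param_map r : cube_lipschitz_mx r param_map.
Proof.
have coord := cube_lipschitz_coord; have cst := cube_lipschitz_cst.
have X_lip : cube_lipschitz_mx r (fun x : param_idx -> R => Xpar (x \o inl \o inl)).
  move=> t i; case E: (insub (i, t) : option block_idx) => [k|].
    by apply: eq_cube_lipschitz (coord _ _ r (inl (inl k))) => x; rewrite mxE E.
  by apply: eq_cube_lipschitz (cst _ _ r 0) => x; rewrite mxE E.
have M_lip : cube_lipschitz_mx r (fun x : param_idx -> R => Mpar (x \o inl \o inr)).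
  move=> a c; case E: (insub (a, c) : option sym_idx) => [k|].
    by apply: eq_cube_lipschitz (coord _ _ r (inl (inr k))) => x; rewrite mxE E.
  case E': (insub (c, a) : option sym_idx) => [k|].
    by apply: eq_cube_lipschitz (coord _ _ r (inl (inr k))) => x; rewrite mxE E E'.
  by apply: eq_cube_lipschitz (cst _ _ r 0) => x; rewrite mxE E E'.
have Q_lip : cube_lipschitz_mx r Qpar.
  apply: cube_lipschitz_mxD; first exact: cube_lipschitz_mx_cst.
  by apply: cube_lipschitz_mxM X_lip _; exact: cube_lipschitz_mx_cst.
apply: cube_lipschitz_mxD.
  apply: cube_lipschitz_mxM => //; apply: cube_lipschitz_mxM => //.
  exact: cube_lipschitz_mx_tr.
by apply: cube_lipschitz_mx_sum => k; apply: cube_lipschitz_mxZ; exact: coord.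
Qed.

End Parametrization.

Lemma card_param_idx (R : realType) n m p (A : 'I_m -> 'M[R]_n)
    (f : {ffun 'I_p -> 'I_n}) :
  injective f -> (rankA A < p * p.+1 %/ 2)%N ->
  (#|{: param_idx A f}| < #|{: upper_idx n}|)%N.
Proof.
move=> f_inj rA; set Tc := [set t : 'I_n | t \notin codom f].
have card_Tc : (#|Tc| + p)%N = n.
  have -> : Tc = ~: [set t | t \in codom f] by apply/setP => t; rewrite !inE.
  have := cardsC [set t | t \in codom f]; rewrite cardsE card_codom // card_ord addnC => ->.
  exact: card_ord.
have card_block : #|{: block_idx f}| = (p * #|Tc|)%N.
  rewrite card_sig -[p in (p * _)%N]card_ord -cardsT -cardsX.
  by apply: eq_card => -[i t]; rewrite !inE.
have card_sym : (2 * #|{: sym_idx f}| = #|Tc| * #|Tc|.+1)%N.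
  rewrite -(card_upper_pairs Tc) card_sig; congr (2 * _)%N.
  by apply: eq_card => -[a c]; rewrite !inE.
have card_upper : (2 * #|{: upper_idx n}| = n * n.+1)%N.
  rewrite -[in RHS](card_ord n) -[in RHS]cardsT -card_upper_pairs card_sig.
  congr (2 * _)%N.
  by apply: eq_card => -[a c]; rewrite !inE !andbT.
rewrite /param_idx !card_sum card_ord card_block -/(rankA A).
have := leq_divM (p * p.+1) 2; rewrite mulnC => rA'.
rewrite -(ltn_pmul2l (ltn0Sn 1)) !mulnDr card_sym card_upper.
move: rA rA' card_Tc; set r := rankA A; set q := #|Tc|; clearbody r q.
nia.
Qed.

Lemma sym_null_of_nullset (R : realType) n (N : 'M[R]_n -> Prop) :
  (forall X, N X -> sym_mx X) ->
  nullset (fun z : upper_idx n -> R =>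
    exists2 X, N X & forall ij, z ij = X (val ij).1 (val ij).2) ->
  sym_null N.
Proof.
move=> N_sym N_null; split=> // eps eps_gt0.
have [lo [hi [le_lohi cover vol]]] := N_null eps eps_gt0.
by exists lo, hi; do 2 split=> //; move=> X NX; apply: cover; exists X.
Qed.

Section DegenerateCosts.
Variables (R : realType) (n m p : nat) (A : 'I_m -> 'M[R]_n).

Definition degenerate_cost (C : 'M[R]_n) : Prop :=
  sym_mx C /\ exists (f : {f : {ffun 'I_p -> 'I_n} | injectiveb f}) (N : nat)
    (x : param_idx A (val f) -> R), cube N.+1%:R x /\ C = param_map x.

Lemma sym_null_degenerate_cost :
  (0 < n)%N -> (rankA A < p * p.+1 %/ 2)%N -> sym_null degenerate_cost.
Proof.
move=> n_gt0 rA; apply: sym_null_of_nullset => [C [] //|].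
have j0 : upper_idx n by exists (Ordinal n_gt0, Ordinal n_gt0).
pose image (fN : {f : {ffun 'I_p -> 'I_n} | injectiveb f} * nat) (z : upper_idx n -> R) :=
  exists x : param_idx A (val fN.1) -> R,
  cube fN.2.+1%:R x /\ forall ij, z ij = param_map x (val ij).1 (val ij).2.
apply: (nullsetS (Q := fun z => exists fN, image fN z)).
  by move=> z [X [_ [f [N [x [x_cube ->]]]]] zX]; exists (f, N), x.
apply: (nullset_countable_union j0 (P := image)) => -[[f f_injb] N].
have f_inj : injective f by apply/injectiveP.
have [L L_ge0 F_lip] := cube_lipschitz_uniform (fun ij : upper_idx n =>
  cube_lipschitz_param_map A f N.+1%:R (val ij).1 (val ij).2).
rewrite /image /=.
exact: (nullset_lipschitz_image j0 (card_param_idx f_inj rA) (ltr0Sn _ _) L_ge0 F_lip).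
Qed.

Lemma degenerate_cost_full_rank (C S : 'M[R]_n) nu (Y : 'M[R]_(n, p)) :
  sym_mx C -> sym_mx S -> S *m Y = 0 -> \rank Y = p -> C = S + Aadj A nu ->
  degenerate_cost C.
Proof.
move=> sC sS SY rY eC; split=> //.
have [f f_inj Yf_unit] := exists_unit_rowsub rY.
have [x ->] := param_map_cover f_inj sS SY Yf_unit eC.
have [N x_cube] := cube_bound x.
have f_injb : injectiveb f by apply/injectiveP.
by exists (exist _ f f_injb), N, x.
Qed.

End DegenerateCosts.

Theorem theorem1 (R : realType) (n m p : nat)
  (A : 'I_m -> 'M[R]_n) (b : 'I_m -> R) :
  (1 <= n)%N -> (1 <= m)%N -> (1 <= p)%N ->
  (forall i, sym_mx (A i)) ->
  (exists X : 'M[R]_n, SDP_feasible A b X) ->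
  (exists Y : 'M[R]_(n, p), Mp A b Y) ->
  (rankA A < p * p.+1 %/ 2)%N ->
  assumption1 p A b ->
  exists N : 'M[R]_n -> Prop, sym_null N /\
    forall C : 'M[R]_n, sym_mx C -> ~ N C ->
      forall Y : 'M[R]_(n, p), second_order_critical A b C Y ->
        P_optimal A b C Y /\ SDP_optimal A b C (Y *m Y^T).
Proof.
(* Criticality is stated directly in terms of [S(Y)]. *)
move=> n_gt0 _ _ Asym _ _ rA _.
exists (degenerate_cost p A); split; first exact: sym_null_degenerate_cost.
move=> C sC C_ok Y [[Y_feas SY] curv].
set S := Smat A C Y.
have eC : C = S + Aadj A (mu A C Y) by rewrite /S /Smat subrK.
have sS : sym_mx S by rewrite /sym_mx /S /Smat linearB /= sC (sym_Aadj Asym).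
have [rY|rY] := ltnP (\rank Y) p; last first.
  case: C_ok; apply: degenerate_cost_full_rank sC sS SY _ eC.
  by apply/eqP; rewrite eqn_leq rank_leq_col.
apply: (dual_certificate_optimal Asym sC eC _ SY Y_feas).
exact: (psd_of_rank_deficient Asym rY curv).
Qed.
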